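(* Let $m$ and $n_1,\ldots,n_t$ be positive integers such that for every $1\leq i\leq t$, $n_i$ is even and $m\geq n_i\geq 2 \lceil \log (81^{t-1}m)\rceil+1$. Then $BR(C_{n_1},\ldots,C_{n_t},K_{m,m})\leq 81^{t}m$.
   Context: $C_k$ is the cycle on $k$ vertices and $K_{m,m}$ the complete bipartite graph with both parts of size $m$. For bipartite graphs $G_1,\ldots,G_k$, the bipartite Ramsey number $BR(G_1,\ldots,G_k)$ is the smallest integer $b$ such that for every coloring of the edges of $K_{b,b}$ with colors $1,\ldots,k$ there is, for some $i$, a copy of $G_i$ all of whose edges have color $i$. $\log$ denotes the logarithm to base $2$. *)

From mathcomp Require Import all_boot.
Set Implicit Arguments. Unset Strict Implicit. Unset Printing Implicit Defensive.

Record sgraph := SGraph { sg_vert : finType; sg_adj : rel sg_vert }.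

Definition cycle_graph (n : nat) : sgraph :=
  @SGraph 'I_n (fun i j : 'I_n =>
    (i != j) && ((val j == i.+1 %% n) || (val i == j.+1 %% n))).

Definition Kmm (m : nat) : sgraph :=
  @SGraph ('I_m + 'I_m)%type (fun u v =>
    match u, v with
    | inl _, inr _ | inr _, inl _ => true
    | _, _ => false
    end).

(* A k-edge-coloring of K_{b,b} (parts 'I_b + 'I_b): colour of edge {x,y}, x left, y right. *)
Definition bcoloring (b k : nat) := 'I_b -> 'I_b -> 'I_k.

Definition ecol (b k : nat) (c : bcoloring b k) (u v : ('I_b + 'I_b)%type) : option 'I_k :=
  match u, v with
  | inl x, inr y => Some (c x y)
  | inr y, inl x => Some (c x y)
  | _, _ => None
  end.

Definition mono_copy (b k : nat) (c : bcoloring b k) (i : 'I_k) (G : sgraph) : Prop :=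
  exists f : sg_vert G -> ('I_b + 'I_b)%type,
    injective f /\ forall u v, sg_adj u v -> ecol c (f u) (f v) = Some i.

Definition bip_ramsey_prop (Gs : seq sgraph) (b : nat) : Prop :=
  forall c : bcoloring b (size Gs),
    exists i : 'I_(size Gs), mono_copy c i (nth (cycle_graph 0) Gs i).

(* BR(Gs) <= N, where BR(Gs) is the least b with the property:
   equivalently, some b <= N has the property. *)
Definition BR_le (Gs : seq sgraph) (N : nat) : Prop :=
  exists2 b, b <= N & bip_ramsey_prop Gs b.

From mathcomp Require Import all_boot zify.
From Stdlib Require Import Classical.
Set Implicit Arguments. Unset Strict Implicit. Unset Printing Implicit Defensive.

(* Go through the colours one by one, keeping two sets A, B of vertices on
   opposite sides such that every edge between them has colour >= i.  Let
   |A|, |B| >= 81 M and let G be the graph of colour-i edges between A and B.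
   If some M-subsets of A and of B span no edge of G, all edges between them
   have colour > i and we continue with them.  Otherwise G is M-linked, and it
   contains every even cycle C_n with 2 log M < n <= M: split A + B into two
   pieces with 11 M vertices per side and a rest with 59 M per side; in each
   piece keep a subset W_j on which sets smaller than M expand fourfold; a
   depth-first search in the rest gives a path on 57 M vertices, from which we
   take a subpath of odd length n - 2k - 1 (k = up_log 2 M) whose ends have two
   neighbours in W_1, resp. W_2.  From each end, expansion grows 2^k >= M
   simple paths of length k inside W_j, and linkedness joins the ends of two
   of them, closing a cycle of length n.  After the t cycle colours the sets
   still have m vertices and all their edges have the last colour: a K_{m,m}. *)

(** * Counting along sequences *)

Lemma subset_of_card (T : finType) (A : {set T}) n :
  n <= #|A| -> exists2 B : {set T}, B \subset A & #|B| = n.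
Proof.
move=> /card_geqP[s [us <- sA]]; exists [set x in s].
  by apply/subsetP => x; rewrite inE => /sA.
by rewrite cardsE; apply/card_uniqP.
Qed.

Lemma card_le_setU (T : finType) (A B C : {set T}) :
  A \subset B :|: C -> #|A| <= #|B| + #|C|.
Proof. by move/subset_leq_card/leq_trans; apply; apply: leq_card_setU. Qed.

Lemma count_mem_uniq (T : finType) (B : {set T}) (s : seq T) :
  uniq s -> count [in B] s <= #|B|.
Proof.
move=> us; rewrite -size_filter -(card_uniqP (filter_uniq _ us)).
by apply/subset_leq_card/subsetP => x; rewrite mem_filter => /andP[].
Qed.

Lemma cycle_nth (T : Type) (e : rel T) x0 c i : cycle e c -> i < size c ->
  e (nth x0 c i) (nth x0 c (i.+1 %% size c)).
Proof.
rewrite (cycle_path x0) => /(pathP x0) ec ic.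
have [lt|ge] := ltnP i.+1 (size c); first by rewrite modn_small //; exact: (ec i.+1 lt).
have Si : i.+1 = size c by lia.
by have := ec 0; rewrite -Si modnn -nth_last -Si; apply.
Qed.

Lemma uniq_window (T : finType) x0 (s : seq T) (B1 B2 : {set T}) l :
  uniq s -> #|B1| + #|B2| + l < size s ->
  exists2 j, j + l < size s & (nth x0 s j \notin B1) && (nth x0 s (j + l) \notin B2).
Proof.
move=> us lt; set N := size s - l.
pose bad1 j := nth x0 s j \in B1; pose bad2 j := nth x0 (drop l s) j \in B2.
have cnt (t : seq T) (B : {set T}) : uniq t -> N <= size t ->
    count (fun j => nth x0 t j \in B) (iota 0 N) <= #|B|.
  move=> ut Nt; apply: (leq_trans _ (count_mem_uniq B (take_uniq N ut))).
  by rewrite -(map_nth_iota0 x0 Nt) count_map.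
have c1 : count bad1 (iota 0 N) <= #|B1| := cnt s B1 us (leq_subr l _).
have c2 : count bad2 (iota 0 N) <= #|B2| by apply: cnt; rewrite ?drop_uniq ?size_drop.
have : 0 < count (predC (predU bad1 bad2)) (iota 0 N).
  have := count_predC (predU bad1 bad2) (iota 0 N).
  have := count_predUI bad1 bad2 (iota 0 N); rewrite size_iota; lia.
rewrite -has_count => /hasP[j]; rewrite mem_iota /= /bad1 /bad2 nth_drop negb_or.
by move=> jN good; exists j; [rewrite /N in jN; lia | rewrite addnC].
Qed.

Lemma avoiding_subpath (T : finType) (e : rel T) (s : seq T) (B1 B2 : {set T}) l :
  uniq s -> sorted e s -> #|B1| + #|B2| + l < size s ->
  exists b u, [/\ path e b u, uniq (b :: u), {subset b :: u <= s}, size u = l &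
                  (b \notin B1) && (last b u \notin B2)].
Proof.
move=> us ss lt; have x0 : T by case: s lt {us ss} => [|x _] //; lia.
have [j jl goodj] := uniq_window x0 us lt.
have eq_drop : drop j s = nth x0 s j :: drop j.+1 s by apply: drop_nth; lia.
exists (nth x0 s j), (take l (drop j.+1 s)).
have bu : nth x0 s j :: take l (drop j.+1 s) = take l.+1 (drop j s) by rewrite eq_drop.
split.
- by apply: take_path; have := drop_sorted j ss; rewrite eq_drop.
- by rewrite bu take_uniq ?drop_uniq.
- by move=> x; rewrite bu => /mem_take /mem_drop.
- by rewrite size_takel // size_drop; lia.
rewrite (last_nth x0) bu size_takel ?size_drop; last by lia.
by rewrite nth_take // nth_drop.
Qed.

(** * Linked bipartite graphs *)

Section BipartiteGraph.

Variables (V : finType) (adj : rel V) (side : V -> bool).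
Hypothesis adj_sym : symmetric adj.
Hypothesis adj_side : forall x y, adj x y -> side y = ~~ side x.
Implicit Types (B D R S W X Y Z : {set V}) (T p : seq V).

Lemma adj_irrefl : irreflexive adj.
Proof. by move=> x; apply/negP => /adj_side; case: (side x). Qed.

Lemma path_side a p : path adj a p -> side (last a p) = side a (+) odd (size p).
Proof.
elim: p a => [|x p IHp] a /=; first by rewrite addbF.
by case/andP => /adj_side sx /IHp ->; rewrite sx addNb -addbN.
Qed.

Definition part (D : {set V}) s := D :&: [set v | side v == s].
Definition nbhd (X : {set V}) := [set y | [exists x in X, adj x y]].

Lemma in_part D s x : (x \in part D s) = (x \in D) && (side x == s).
Proof. by rewrite !inE. Qed.

Lemma partS D D' s : D \subset D' -> part D s \subset part D' s.
Proof. exact: setSI. Qed.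

Lemma card_part_setU1 D x s : #|part (x |: D) s| <= #|part D s|.+1.
Proof.
rewrite -add1n -(cards1 x); apply: card_le_setU; apply/subsetP => y.
by rewrite !inE => /andP[/orP[->|->] ->]; rewrite ?orbT.
Qed.

Lemma nbhdP X y : reflect (exists2 x, x \in X & adj x y) (y \in nbhd X).
Proof.
rewrite inE; apply: (iffP existsP) => [[x /andP[]]|[x xX xy]]; first by exists x.
by exists x; rewrite xX.
Qed.

Variable M : nat.

Definition linked (D : {set V}) := forall s (X Y : {set V}),
  X \subset part D s -> Y \subset part D (~~ s) -> M <= #|X| -> M <= #|Y| ->
  exists x y, [/\ x \in X, y \in Y & adj x y].

Lemma linked_gt0 D : linked D -> 0 < M.
Proof.
move=> lD; rewrite lt0n; apply/eqP => M0.
have [||||x [y [/[!inE]]]] // := lD true set0 set0; rewrite ?sub0set ?M0 //.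
Qed.

Lemma linkedS D D' : D' \subset D -> linked D -> linked D'.
Proof.
move=> sD lD s X Y sX sY; apply: lD.
- exact: subset_trans sX (partS _ sD).
- exact: subset_trans sY (partS _ sD).
Qed.

(* A depth-first search in D: S holds the finished vertices and T the stack,
   top first, which is a path. *)
Record dfs_inv (D S : {set V}) (T : seq V) : Prop := DfsInv {
  dfs_done_sub : S \subset D;
  dfs_stack_sub : {subset T <= D};
  dfs_stack_uniq : uniq T;
  dfs_stack_new : forall x, x \in T -> x \notin S;
  dfs_stack_path : sorted adj T;
  dfs_done_closed : forall x y, x \in S -> y \in D -> adj x y -> (y \in S) || (y \in T)
}.

Definition unvisited D S (T : seq V) := [set y in D | (y \notin S) && (y \notin T)].

Definition dfs_measure D S T := 2 * #|unvisited D S T| + size T.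

Lemma dfs_push D S T u : dfs_inv D S T -> u \in D -> u \notin S -> u \notin T ->
  path adj u T -> dfs_inv D S (u :: T) /\ dfs_measure D S (u :: T) < dfs_measure D S T.
Proof.
case=> sSD sTD uT TnS _ cS uD uS unT pu; split.
  split=> //=; last by move=> x y xS yD /(cS x y xS yD); rewrite inE => /orP[]->; rewrite ?orbT.
  - by move=> y; rewrite inE => /orP[/eqP->|/sTD].
  - by rewrite unT.
  - by move=> y; rewrite inE => /orP[/eqP->|/TnS].
rewrite /dfs_measure; have -> : unvisited D S (u :: T) = unvisited D S T :\ u.
  by apply/setP => y; rewrite !inE negb_or; case: (y =P u) => [->|]; rewrite ?eqxx ?andbF.
rewrite (cardsD1 u (unvisited D S T)) !inE uD uS unT /=; lia.
Qed.

Lemma dfs_pop D S T x : dfs_inv D S (x :: T) ->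
  (forall u, u \in D -> u \notin S -> u \notin x :: T -> ~~ adj x u) ->
  dfs_inv D (x |: S) T /\ dfs_measure D (x |: S) T < dfs_measure D S (x :: T).
Proof.
case=> sSD sTD /andP[xT uT] TnS pT cS stuck; split.
  split=> //.
  - by rewrite subUset sub1set sSD sTD ?mem_head.
  - by move=> y yT; apply: sTD; rewrite inE yT orbT.
  - move=> y yT; rewrite !inE negb_or TnS ?inE ?yT ?orbT // andbT.
    by apply: contraNneq xT => <-.
  - exact: path_sorted pT.
  move=> z y; rewrite !inE => /orP[/eqP->|zS] yD zy.
    case: (y =P x) => [yx|/eqP yx]; first by rewrite yx adj_irrefl in zy.
    by apply: contraTT zy => /norP[yS yT]; apply: stuck; rewrite // inE negb_or yx.
  by move: (cS z y zS yD zy); rewrite inE => /or3P[]->; rewrite ?orbT.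
rewrite /dfs_measure; have -> : unvisited D (x |: S) T = unvisited D S (x :: T).
  by apply/setP => y; rewrite !inE !negb_or; case: (y == x); rewrite ?andbF.
by rewrite /= addnS ltnSn.
Qed.

Lemma dfs_step D S T : dfs_inv D S T -> ~~ (D \subset S) ->
  exists S' T' x,
    [/\ dfs_inv D S' T', dfs_measure D S' T' < dfs_measure D S T & S' \subset x |: S].
Proof.
move=> inv /subsetPn[u0 u0D u0S].
have push u : u \in D -> u \notin S -> u \notin T -> path adj u T -> exists S' T' x,
    [/\ dfs_inv D S' T', dfs_measure D S' T' < dfs_measure D S T & S' \subset x |: S].
  move=> uD uS unT pu; have [inv' lt] := dfs_push inv uD uS unT pu.
  by exists S, (u :: T), u; split; rewrite ?subsetUr.
case: T inv push => [|x T] inv push; first exact: push u0D u0S _ _.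
case: (pickP [pred u | [&& u \in D, u \notin S, u \notin x :: T & adj x u]]) => [u|stuck].
  move=> /and4P[uD uS unT xu]; apply: (push u) => //=.
  by rewrite adj_sym xu; exact: dfs_stack_path inv.
have [|inv' lt] := dfs_pop inv; last by exists (x |: S), T, x; split.
by move=> u uD uS unT; apply/negP => xu; have := stuck u; rewrite /= uD uS unT xu.
Qed.

Lemma dfs_run D : (forall s, M < #|part D s|) ->
  forall S T, dfs_inv D S T -> (forall s, #|part S s| <= M) ->
  exists S' T' s0, [/\ dfs_inv D S' T', forall s, #|part S' s| <= M & M <= #|part S' s0|].
Proof.
move=> bigD S T; have [n] := ubnP (dfs_measure D S T).
elim: n S T => // n IHn S T lt_n inv small.
case: (boolP [exists s, M <= #|part S s|]) => [/existsP[s0 hs0]|/existsPn none].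
  by exists S, T, s0.
have nDS : ~~ (D \subset S).
  apply: contraT => /negbNE /(partS true) /subset_leq_card.
  by have := bigD true; have := none true; lia.
have [S' [T' [x [inv' lt' sub']]]] := dfs_step inv nDS.
apply: (IHn S' T') => [|//|s]; first lia.
have := card_part_setU1 S x s; have := subset_leq_card (partS s sub').
have := none s; lia.
Qed.

Lemma linked_long_path D L : linked D -> M < L -> (forall s, L <= #|part D s|) ->
  exists T : seq V, [/\ {subset T <= D}, uniq T, sorted adj T & L <= 2 * M + size T].
Proof.
move=> lD ML bigD.
have inv0 : dfs_inv D set0 [::].
  by split=> //; rewrite ?sub0set // => x y; rewrite inE.
have small0 s : #|part set0 s| <= M by rewrite /part set0I cards0.
have [S [T [s [[sSD sTD uT TnS pT cS] small big]]]] :=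
  dfs_run (fun s => leq_trans ML (bigD s)) inv0 small0.
exists T; split=> //.
set Y := part (unvisited D S T) (~~ s).
have ltY : #|Y| < M.
  rewrite ltnNge; apply/negP => geY.
  have [|x [y [xS yY xy]]] := lD s (part S s) Y (partS s sSD) _ big geY.
    by apply/subsetP => y; rewrite !inE => /andP[/andP[->]].
  move: xS yY; rewrite !inE => /andP[xS _] /andP[/and3P[yD /negbTE yS /negbTE yT] _].
  by have := cS x y xS yD xy; rewrite yS yT.
have cT : #|[set x in T]| <= size T by rewrite cardsE card_size.
have : part D (~~ s) \subset part S (~~ s) :|: ([set x in T] :|: Y).
  apply/subsetP => z; rewrite /Y !inE => /andP[zD ->]; rewrite zD !andbT.
  by case: (z \in S); case: (z \in T).
move/card_le_setU; have := card_le_setU (subxx ([set x in T] :|: Y)).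
have := bigD (~~ s); have := small (~~ s); lia.
Qed.

Definition expanding W := forall s X,
  X \subset part W s -> 0 < #|X| < M -> 4 * #|X| <= #|nbhd X :&: W|.

Definition nonexpanding R Z := [&& Z \subset R,
  [forall s, #|nbhd (part Z s) :&: (R :\: Z)| <= 4 * #|part Z s|] &
  [forall s, #|part Z s| < 2 * M]].

Lemma nonexpanding_part_small D R Z : linked D -> R \subset D ->
  (forall s, 11 * M <= #|part R s|) -> nonexpanding R Z -> forall s, #|part Z s| < M.
Proof.
move=> lD sRD bigR /and3P[sZR /forallP nbZ /forallP smallZ] s.
rewrite ltnNge; apply/negP => geZ.
set Y := part R (~~ s) :\: nbhd (part Z s).
have geY : M <= #|Y|.
  have : part R (~~ s) \subset Y :|: (nbhd (part Z s) :&: (R :\: Z) :|: part Z (~~ s)).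
    apply/subsetP => z zR; move: (zR); rewrite /Y !inE => /andP[-> ->]; rewrite !andbT.
    by case: (z \in Z); case: [exists x in part Z s, adj x z]; rewrite ?orbT.
  move/card_le_setU; have := card_le_setU (subxx (nbhd (part Z s) :&: (R :\: Z) :|: part Z (~~ s))).
  have := bigR (~~ s); have := nbZ s; have := smallZ s; have := smallZ (~~ s); lia.
have [||x [y [xZ /setDP[_ /nbhdP yN] xy]]] := lD s (part Z s) Y _ _ geZ geY.
- exact/partS/(subset_trans sZR).
- exact: subset_trans (subsetDl _ _) (partS _ sRD).
by apply: yN; exists x.
Qed.

Lemma nbhdU X Y : nbhd (X :|: Y) = nbhd X :|: nbhd Y.
Proof.
apply/setP => y; rewrite in_setU.
apply/nbhdP/orP => [[x /setUP[] xX xy]|[] /nbhdP[x xX xy]]; [left|right|..];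
  by [apply/nbhdP; exists x | exists x; rewrite // in_setU xX ?orbT].
Qed.

Lemma nonexpandingU R Z s X : nonexpanding R Z -> (forall s, #|part Z s| < M) ->
  X \subset part (R :\: Z) s -> #|X| < M ->
  #|nbhd X :&: (R :\: Z)| <= 4 * #|X| -> nonexpanding R (Z :|: X).
Proof.
move=> /and3P[sZR /forallP nbZ _] smallZ sX ltX nbX.
have XRZ : X \subset R :\: Z := subset_trans sX (subsetIl _ _).
have sideX x : x \in X -> side x = s by move/(subsetP sX); rewrite !inE => /andP[_ /eqP].
have partZX : part (Z :|: X) s = part Z s :|: X.
  apply/setP => z; rewrite !inE; case: (boolP (z \in X)) => zX; last by rewrite !orbF.
  by rewrite sideX // eqxx !orbT.
have partZX' s' : s' != s -> part (Z :|: X) s' = part Z s'.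
  move=> ne; apply/setP => z; rewrite !inE; case: (boolP (z \in X)) => zX; last by rewrite orbF.
  by rewrite sideX // eq_sym (negbTE ne) !andbF.
have cardZX : #|part Z s :|: X| = #|part Z s| + #|X|.
  rewrite cardsU (_ : part Z s :&: X = set0) ?cards0 ?subn0 //.
  apply/setP => z; rewrite !inE; apply/negP => /andP[/andP[zZ _] /(subsetP XRZ)].
  by rewrite !inE zZ.
apply/and3P; split.
- by rewrite subUset sZR (subset_trans XRZ (subsetDl _ _)).
- apply/forallP => s'; case: (eqVneq s' s) => [->|ne]; last first.
    rewrite partZX' //; apply: leq_trans (nbZ s'); apply/subset_leq_card/setIS.
    exact/setDS/subsetUl.
  rewrite partZX nbhdU setIUl cardZX mulnDr.
  apply: leq_trans (card_le_setU (subxx _)) (leq_add (leq_trans _ (nbZ s)) (leq_trans _ nbX));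
    by apply/subset_leq_card/setIS/setDS/subsetUl.
- apply/forallP => s'; case: (eqVneq s' s) => [->|ne].
    by rewrite partZX cardZX; have := smallZ s; lia.
  by rewrite partZX' //; have := smallZ s'; lia.
Qed.

(* Remove from R a largest nonexpanding Z: linkedness keeps its sides below M,
   and maximality makes R :\: Z expanding. *)
Lemma expanding_subset D R : linked D -> R \subset D ->
  (forall s, 11 * M <= #|part R s|) ->
  exists2 W : {set V}, W \subset R & (forall s, 10 * M <= #|part W s|) /\ expanding W.
Proof.
move=> lD sRD bigR.
have nonexp0 : nonexpanding R set0.
  rewrite /nonexpanding sub0set /=.
  apply/andP; split; apply/forallP => s; rewrite /part set0I cards0.
    by rewrite muln0 leqn0 cards_eq0 -subset0; apply/subsetP => y /setIP[/nbhdP[x]]; rewrite inE.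
  by have := linked_gt0 lD; lia.
have [Z nonexpZ maxZ] := arg_maxnP (fun Z : {set V} => #|Z|) nonexp0.
have smallZ := nonexpanding_part_small lD sRD bigR nonexpZ.
exists (R :\: Z); first exact: subsetDl.
split=> [s|s X sX /andP[X0 ltX]].
  have : part R s \subset part (R :\: Z) s :|: part Z s.
    by apply/subsetP => z; rewrite !inE => /andP[-> ->]; case: (z \in Z).
  by move/card_le_setU; have := bigR s; have := smallZ s; lia.
rewrite leqNgt; apply/negP => /ltnW nbX.
have := maxZ _ (nonexpandingU nonexpZ smallZ sX ltX nbX).
rewrite cardsU (_ : Z :&: X = set0) ?cards0; first lia.
by apply/setP => z; rewrite !inE; apply/negP => /andP[zZ /(subsetP sX)]; rewrite !inE zZ.
Qed.

(* S is the i-th level of a tree of simple paths from a into W, and B holds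
   the levels 1, ..., i. *)
Definition tree_level W a i S B := [/\ S \subset B, B \subset W, #|S| = 2 ^ i, #|B|.+2 <= 2 ^ i.+1 &
  forall x, x \in S -> exists p,
    [/\ size p = i, path adj a p, uniq (a :: p), {subset p <= B} & last a p = x]].

Lemma tree_level1 W a : a \notin W -> 2 <= #|nbhd [set a] :&: W| ->
  exists S, tree_level W a 1 S S.
Proof.
move=> aW /subset_of_card[S sS cS]; exists S; split; rewrite ?cS //.
- exact: subset_trans sS (subsetIr _ _).
move=> x xS; have /setIP[/nbhdP[_ /set1P-> ax] xW] := subsetP sS x xS.
exists [:: x]; split=> //=; rewrite ?ax ?inE ?andbT //.
- by apply: contraNneq aW => ->.
- by move=> y; rewrite inE => /eqP->.
Qed.

Lemma tree_level_step W a i S B : expanding W -> a \notin W -> 0 < i -> 2 ^ i < M ->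
  tree_level W a i S B -> exists S' B', tree_level W a i.+1 S' B'.
Proof.
move=> expW aW i0 ltM [sSB sBW cS cB paths].
have sSW : S \subset part W (side a (+) odd i).
  apply/subsetP => x xS; have [p [sz pa _ pB px]] := paths x xS.
  by rewrite in_part (subsetP sBW) ?(subsetP sSB) //= -px path_side // sz.
have expS := expW _ _ sSW; rewrite cS expn_gt0 /= ltM in expS.
set Av := nbhd S :&: W :\: B.
have /subset_of_card[S' sS' cS'] : 2 ^ i.+1 <= #|Av|.
  have : nbhd S :&: W \subset Av :|: B.
    by apply/subsetP => z zN; rewrite /Av in_setU in_setD zN andbT; case: (z \in B).
  move/card_le_setU; have := expS isT; rewrite expnS in cB *; lia.
exists S', (B :|: S'); split; rewrite ?cS' //.
- exact: subsetUr.
- by rewrite subUset sBW (subset_trans sS') // /Av -setIDAC subsetIr.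
- have := card_le_setU (subxx (B :|: S')); rewrite cS' !expnS in cB *; lia.
move=> x' x'S'; have /setDP[/setIP[/nbhdP[x xS xx'] x'W] x'B] := subsetP sS' x' x'S'.
have [p [sz pa up pB px]] := paths x xS.
exists (rcons p x'); split.
- by rewrite size_rcons sz.
- by rewrite rcons_path pa px.
- rewrite -rcons_cons rcons_uniq up andbT inE negb_or.
  by rewrite (contraNneq _ aW) => [|<-] //; apply: contraNN x'B => /pB.
- by move=> y; rewrite mem_rcons !inE => /orP[/eqP->|/pB->]; rewrite ?x'S' ?orbT.
- by rewrite last_rcons.
Qed.

Lemma expansion_paths W a k : expanding W -> a \notin W -> 2 <= #|nbhd [set a] :&: W| ->
  0 < k -> 2 ^ k.-1 < M ->
  exists2 S : {set V}, 2 ^ k <= #|S| & forall x, x \in S -> exists p,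
    [/\ size p = k, path adj a p, uniq (a :: p), {subset p <= W} & last a p = x].
Proof.
move=> expW aW dega k0 ltM.
have levels i : 0 < i <= k -> exists S B, tree_level W a i S B.
  elim: i => [//|[_|i IHi] /andP[_ ik]].
    by have [S lvl] := tree_level1 aW dega; exists S, S.
  have [//|S [B lvl]] := IHi; first exact: ltnW.
  apply: tree_level_step lvl => //; apply: leq_ltn_trans ltM.
  by rewrite leq_exp2l //; lia.
have [|S [B [_ sBW cS _ paths]]] := levels k; first by rewrite k0 /=.
exists S; first by rewrite cS.
by move=> x /paths[p [? ? ? pB ?]]; exists p; split=> // y /pB /(subsetP sBW).
Qed.

Lemma card_nbhd_low_degree W X : (forall v, v \in X -> #|nbhd [set v] :&: W| <= 1) ->
  #|nbhd X :&: W| <= #|X|.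
Proof.
move=> low; pose f v := odflt v [pick y in nbhd [set v] :&: W].
apply: (leq_trans _ (leq_imset_card f X)).
apply/subset_leq_card/subsetP => y /setIP[/nbhdP[v vX vy] yW].
have yN : y \in nbhd [set v] :&: W by rewrite inE yW andbT; apply/nbhdP; exists v; rewrite ?inE.
apply/imsetP; exists v => //; rewrite /f.
case: pickP => [z zN|/(_ y)]; last by rewrite yN.
by move/card_le1_eqP: (low v vX) => /(_ y z yN zN).
Qed.

Lemma low_degree_small D W X : linked D -> W \subset D -> X \subset D ->
  (forall s, 2 * M <= #|part W s|) -> (forall v, v \in X -> #|nbhd [set v] :&: W| <= 1) ->
  #|X| < 2 * M.
Proof.
move=> lD sWD sXD bigW low.
suff small s : #|part X s| < M.
  have : X \subset part X false :|: part X true.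
    by apply/subsetP => z zX; rewrite !inE zX; case: (side z).
  by move/card_le_setU; have := small false; have := small true; lia.
rewrite ltnNge; apply/negP => /subset_of_card[X' sX' cX'].
set Y := part W (~~ s) :\: nbhd X'.
have cN : #|nbhd X' :&: W| <= M.
  by rewrite -cX'; apply: card_nbhd_low_degree => v /(subsetP sX') /setIP[/low].
have : part W (~~ s) \subset Y :|: (nbhd X' :&: W).
  apply/subsetP => z zW; rewrite /Y in_setU in_setD in_setI zW.
  by move: zW; rewrite in_part => /andP[-> _]; case: (z \in nbhd X').
move/card_le_setU => cY.
have [||||x [y [xX' /setDP[_ /nbhdP yN] xy]]] := lD s X' Y _ _ _ _.
- exact: subset_trans sX' (partS s sXD).
- exact: subset_trans (subsetDl _ _) (partS _ sWD).
- by rewrite cX'.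
- by have := bigW (~~ s); lia.
by apply: yN; exists x.
Qed.

Lemma split_balanced D m1 m2 : (forall s, m1 + m2 <= #|part D s|) ->
  exists2 R : {set V}, R \subset D &
    (forall s, #|part R s| = m1) /\ (forall s, m2 <= #|part (D :\: R) s|).
Proof.
move=> bigD.
have [X0 sX0 cX0] := subset_of_card (leq_trans (leq_addr m2 m1) (bigD false)).
have [X1 sX1 cX1] := subset_of_card (leq_trans (leq_addr m2 m1) (bigD true)).
have partR s : part (X0 :|: X1) s = if s then X1 else X0.
  apply/setP => z; rewrite in_part in_setU.
  case z0: (z \in X0); case z1: (z \in X1) => /=.
  - by move: (subsetP sX0 z z0) (subsetP sX1 z z1); rewrite !in_part => /andP[_ /eqP->] /andP[].
  - by move: (subsetP sX0 z z0); rewrite in_part => /andP[_ /eqP->]; case: s.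
  - by move: (subsetP sX1 z z1); rewrite in_part => /andP[_ /eqP->]; case: s.
  - by case: s.
exists (X0 :|: X1).
  by rewrite subUset (subset_trans sX0 (subsetIl _ _)) (subset_trans sX1 (subsetIl _ _)).
split=> s; first by rewrite partR; case: s.
have : part D s \subset part (D :\: (X0 :|: X1)) s :|: part (X0 :|: X1) s.
  apply/subsetP => z; rewrite !inE => /andP[-> ->]; rewrite !andbT.
  by case: (z \in X0); case: (z \in X1).
by move/card_le_setU; rewrite partR; have := bigD s; case: s; lia.
Qed.

(* The cycle goes from a to last a pa along pa, jumps to last b pb, returns
   to b along pb and closes at a along u. *)
Lemma cycle_glue a b pa pb u : path adj a pa -> path adj b pb ->
  adj (last a pa) (last b pb) -> path adj b u -> last b u = a ->
  cycle adj (pa ++ rev (b :: pb) ++ u).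
Proof.
move=> pa_ pb_ xy pu ua.
have last_mid z : last z (rev (b :: pb)) = b by rewrite rev_cons last_rcons.
have path_mid z : path adj z (rev (b :: pb)) = adj z (last b pb) && path adj b pb.
  rewrite (lastI b pb) rev_rcons /= rev_path.
  by congr (_ && _); apply: eq_path => x y; apply: adj_sym.
by rewrite (cycle_path a) !last_cat last_mid ua !cat_path pa_ path_mid last_mid xy pb_ pu.
Qed.

Lemma cycle_through_trees D W1 W2 b u k :
  linked D -> W1 :|: W2 \subset D -> [disjoint W1 & W2] -> expanding W1 -> expanding W2 ->
  0 < k -> 2 ^ k.-1 < M -> M <= 2 ^ k ->
  path adj b u -> uniq (b :: u) -> {subset b :: u <= ~: (W1 :|: W2)} -> odd (size u) ->
  2 <= #|nbhd [set last b u] :&: W1| -> 2 <= #|nbhd [set b] :&: W2| ->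
  exists c, [/\ uniq c, size c = (2 * k).+1 + size u & cycle adj c].
Proof.
move=> lD sWD dW expW1 expW2 k0 ltM Mk pu ubu sbu oddu dega degb.
have outW z : z \in b :: u -> (z \notin W1) && (z \notin W2).
  by move/sbu; rewrite !inE negb_or.
have /andP[aW1 _] := outW _ (mem_last b u).
have /andP[bW1 bW2] := outW _ (mem_head b u).
have [Sa cSa pathsA] := expansion_paths expW1 aW1 dega k0 ltM.
have [Sb cSb pathsB] := expansion_paths expW2 bW2 degb k0 ltM.
have ends W x0 S : W \subset D -> (forall x, x \in S -> exists p,
    [/\ size p = k, path adj x0 p, uniq (x0 :: p), {subset p <= W} & last x0 p = x]) ->
    S \subset part D (side x0 (+) odd k).
  move=> sW paths; apply/subsetP => x /paths[p [sz pp _ pW <-]].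
  rewrite in_part path_side // sz eqxx andbT.
  case: p sz pW {pp} => [|y p] sz pW; first by rewrite -sz in k0.
  by apply/(subsetP sW)/pW; rewrite /= mem_last.
have [sW1 sW2] : W1 \subset D /\ W2 \subset D by move: sWD; rewrite subUset => /andP[].
have sidea : side (last b u) = ~~ side b by rewrite path_side // oddu addbT.
have [|x [y [xSa ySb xy]]] :=
  lD _ Sa Sb (ends _ _ _ sW1 pathsA) _ (leq_trans Mk cSa) (leq_trans Mk cSb).
  by rewrite sidea addNb negbK; apply: (ends W2).
have [pa [sza ppa upa paW ex]] := pathsA x xSa; subst x.
have [pb [szb ppb upb pbW ey]] := pathsB y ySb; subst y.
exists (pa ++ rev (b :: pb) ++ u); split; last exact: cycle_glue ppa ppb xy pu _.
  have {}upa : uniq pa by case/andP: upa.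
  have [bu uu] : b \notin u /\ uniq u by apply/andP.
  rewrite !cat_uniq rev_uniq upb upa uu has_cat negb_or /=.
  rewrite andbT -andbA; apply/and3P; split; apply/hasPn => z.
  - rewrite mem_rev inE => /orP[/eqP->|/pbW zW2]; apply/negP => /paW zW1.
      by rewrite zW1 in bW1.
    by rewrite (disjointFr dW zW1) in zW2.
  - move=> zu; have /andP[zW1 _] := outW z (@mem_behead _ (b :: u) z zu).
    by apply: contraNN zW1 => /paW.
  - move=> zu; have /andP[_ zW2] := outW z (@mem_behead _ (b :: u) z zu).
    rewrite mem_rev inE negb_or; apply/andP; split.
      by apply: contraNneq bu => <-.
    by apply: contraNN zW2 => /pbW.
by rewrite !size_cat size_rev /= sza szb mul2n -addnn !addSn addnS addnA.
Qed.

Lemma well_rooted_subpath D W1 W2 T l : linked D -> W1 \subset D -> W2 \subset D ->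
  (forall s, 10 * M <= #|part W1 s|) -> (forall s, 10 * M <= #|part W2 s|) ->
  {subset T <= D} -> uniq T -> sorted adj T -> 4 * M + l <= size T ->
  exists b u, [/\ path adj b u, uniq (b :: u), {subset b :: u <= T}, size u = l &
     2 <= #|nbhd [set b] :&: W2| /\ 2 <= #|nbhd [set last b u] :&: W1|].
Proof.
move=> lD sW1 sW2 big1 big2 sTD uT pT lenT.
pose Bad W := [set v | (v \in T) && (#|nbhd [set v] :&: W| <= 1)].
have smallBad W : W \subset D -> (forall s, 10 * M <= #|part W s|) -> #|Bad W| < 2 * M.
  move=> sWD bigW; apply: low_degree_small lD sWD _ _ _.
  - by apply/subsetP => v; rewrite inE => /andP[/sTD].
  - by move=> s; apply: (leq_trans _ (bigW s)); rewrite leq_mul2r; case: eqP.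
  - by move=> v; rewrite inE => /andP[].
have [|b [u [pu ubu sbu szu /andP[goodb gooda]]]] :=
  avoiding_subpath (B1 := Bad W2) (B2 := Bad W1) (l := l) uT pT.
  by have := smallBad _ sW2 big2; have := smallBad _ sW1 big1; lia.
have deg W z : z \in b :: u -> z \notin Bad W -> 2 <= #|nbhd [set z] :&: W|.
  by move=> /sbu zT; rewrite inE zT -ltnNge.
by exists b, u; split; rewrite // !deg ?mem_head ?mem_last.
Qed.

Lemma linked_cycle D n : linked D -> (forall s, 81 * M <= #|part D s|) -> 1 < M ->
  ~~ odd n -> 2 * up_log 2 M < n -> n <= M ->
  exists c, [/\ uniq c, size c = n & cycle adj c].
Proof.
move=> lD bigD M1 evn kn nM; set k := up_log 2 M.
have k0 : 0 < k by rewrite up_log_gt0 M1.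
set l := n - (2 * k).+1.
have nl : n = (2 * k).+1 + l by rewrite /l subnKC.
have room : 4 * M + l <= 57 * M by rewrite /l; lia.
have [s|R1 sR1 [cR1 bigD1]] := split_balanced (m1 := 11 * M) (m2 := 70 * M) (D := D).
  by rewrite -mulnDl bigD.
have [s|R2 sR2 [cR2 bigR3]] := split_balanced (m1 := 11 * M) (m2 := 59 * M) (D := D :\: R1).
  by rewrite -mulnDl bigD1.
set R3 := D :\: R1 :\: R2.
have sR2D : R2 \subset D := subset_trans sR2 (subsetDl _ _).
have sR3 : R3 \subset D := subset_trans (subsetDl _ _) (subsetDl _ _).
have [W1 sW1 [bigW1 expW1]] := expanding_subset lD sR1 (fun s => eq_leq (esym (cR1 s))).
have [W2 sW2 [bigW2 expW2]] := expanding_subset lD sR2D (fun s => eq_leq (esym (cR2 s))).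
have [|T [sT uT pT lenT]] := linked_long_path (linkedS sR3 lD) _ bigR3; first lia.
have {}lenT : 57 * M <= size T by rewrite -(leq_add2l (2 * M)) -mulnDl.
have sW1D := subset_trans sW1 sR1; have sW2D := subset_trans sW2 sR2D.
have [b [u [pu ubu sbu szu [degb dega]]]] := well_rooted_subpath lD sW1D sW2D bigW1 bigW2
  (fun z zT => subsetP sR3 z (sT z zT)) uT pT (leq_trans room lenT).
have oddl : odd l by move: evn; rewrite nl oddD /= oddM /= negbK.
have /andP[ltM Mk] := up_log_bounds (ltnSn 1) M1.
have [||||c [uc szc cc]] := cycle_through_trees lD _ _ expW1 expW2 k0 ltM Mk pu ubu _ _ dega degb.
- by rewrite subUset sW1D sW2D.
- apply/pred0P => z /=; apply/negP => /andP[/(subsetP sW1) z1 /(subsetP sW2) /(subsetP sR2)].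
  by rewrite inE z1.
- move=> z /sbu /sT; rewrite !inE negb_or => /and3P[zR2 zR1 _].
  by rewrite (contraNN (subsetP sW1 z)) ?(contraNN (subsetP sW2 z)).
- by rewrite szu.
by exists c; split; rewrite // szc szu nl.
Qed.

End BipartiteGraph.

(** * Colour classes of K_{b,b} *)

Section ColourClasses.

Variables (b K : nat) (c : bcoloring b K).
Implicit Types (A B : {set 'I_b}).

Definition is_right (v : 'I_b + 'I_b) := if v is inr _ then true else false.

Definition colour_adj (i : 'I_K) : rel ('I_b + 'I_b) := fun u v => ecol c u v == Some i.

Lemma ecol_sym u v : ecol c u v = ecol c v u.
Proof. by case: u; case: v. Qed.

Lemma colour_adj_sym i : symmetric (colour_adj i).
Proof. by move=> u v; rewrite /colour_adj ecol_sym. Qed.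

Lemma colour_adj_side i u v : colour_adj i u v -> is_right v = ~~ is_right u.
Proof. by case: u => x; case: v. Qed.

Definition bipart A B := inl @: A :|: inr @: B.

Lemma part_bipart A B s : part is_right (bipart A B) s = if s then inr @: B else inl @: A.
Proof.
have nl x : inl x \in inr @: B = false by apply/imsetP => -[].
have nr y : inr y \in inl @: A = false by apply/imsetP => -[].
apply/setP => -[x|y]; rewrite in_part in_setU;
  by case: s; rewrite /= ?nl ?nr ?(mem_imset _ _ (@inl_inj _ _)) ?(mem_imset _ _ (@inr_inj _ _))
                      ?andbT ?andbF ?orbF.
Qed.

Lemma mono_cycle i s : 0 < size s -> uniq s -> cycle (colour_adj i) s ->
  mono_copy c i (cycle_graph (size s)).
Proof.
case: s => // x0 s' _ us cs; exists (fun j : 'I_(size (x0 :: s')) => nth x0 (x0 :: s') j); split.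
  by move=> j1 j2 /eqP; rewrite nth_uniq // => /eqP/val_inj.
move=> j1 j2 /andP[_ /orP[] /eqP e]; apply/eqP.
  by rewrite e; apply: (cycle_nth _ cs (ltn_ord j1)).
by rewrite ecol_sym e; apply: (cycle_nth _ cs (ltn_ord j2)).
Qed.

Lemma Kmm_copy (i : 'I_K) m A B : m <= #|A| -> m <= #|B| ->
  (forall x y, x \in A -> y \in B -> c x y = i) -> mono_copy c i (Kmm m).
Proof.
move=> mA mB cAB.
exists (fun u => match u with
                 | inl x => inl (enum_val (widen_ord mA x))
                 | inr y => inr (enum_val (widen_ord mB y)) end); split.
  by move=> [x1|y1] [x2|y2] // [] /enum_val_inj /(congr1 val) /= e; congr (_ _); apply: val_inj.
by move=> [x|y] [x'|y'] //= _; rewrite cAB ?enum_valP.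
Qed.

Lemma sparse_pair (i : 'I_K) A B (X Y : {set 'I_b + 'I_b}) M :
  X \subset inl @: A -> Y \subset inr @: B -> M <= #|X| -> M <= #|Y| ->
  (forall x y, x \in A -> y \in B -> i <= c x y) ->
  (forall u v, u \in X -> v \in Y -> ~~ colour_adj i u v) ->
  exists A' B', [/\ M <= #|A'|, M <= #|B'| & forall x y, x \in A' -> y \in B' -> i < c x y].
Proof.
move=> sX sY MX MY geAB noedge.
have card_pre (f : 'I_b -> 'I_b + 'I_b) (C : {set 'I_b}) (Z : {set 'I_b + 'I_b}) :
    injective f -> Z \subset f @: C -> #|Z| <= #|f @^-1: Z|.
  move=> injf sZ; rewrite -(card_imset _ injf); apply/subset_leq_card/subsetP => z zZ.
  by have /imsetP[x _ ex] := subsetP sZ z zZ; rewrite ex imset_f // inE -ex.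
exists (inl @^-1: X), (inr @^-1: Y); split.
- exact: leq_trans MX (card_pre _ _ _ (@inl_inj _ _) sX).
- exact: leq_trans MY (card_pre _ _ _ (@inr_inj _ _) sY).
move=> x y; rewrite !inE => xX yY.
have /imsetP[x' x'A [ex]] := subsetP sX _ xX; have /imsetP[y' y'B [ey]] := subsetP sY _ yY.
subst x' y'; rewrite ltn_neqAle geAB // andbT; apply: contra (noedge _ _ xX yY) => /eqP e.
by rewrite /colour_adj /= (val_inj e).
Qed.

Lemma colour_step (i : 'I_K) A B M n :
  81 * M <= #|A| -> 81 * M <= #|B| -> (forall x y, x \in A -> y \in B -> i <= c x y) ->
  1 < M -> ~~ odd n -> 2 * up_log 2 M < n -> n <= M ->
  mono_copy c i (cycle_graph n) \/
  exists A' B', [/\ M <= #|A'|, M <= #|B'| & forall x y, x \in A' -> y \in B' -> i < c x y].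
Proof.
move=> cA cB geAB M1 evn kn nM.
case: (classic (exists A' B', [/\ M <= #|A'|, M <= #|B'| &
  forall x y, x \in A' -> y \in B' -> i < c x y])) => [|sparse]; [by right | left].
have lD : linked (colour_adj i) is_right M (bipart A B).
  move=> s X Y; rewrite !part_bipart => sX sY MX MY.
  apply: NNPP => noedge; apply: sparse; case: s sX sY => /= sX sY.
  - apply: sparse_pair sY sX MY MX geAB _ => u v uY vX; apply/negP => e.
    by apply: noedge; exists v, u; rewrite colour_adj_sym.
  - apply: sparse_pair sX sY MX MY geAB _ => u v uX vY; apply/negP => e.
    by apply: noedge; exists u, v.
have [s|s [us sz cs]] := linked_cycle (@colour_adj_sym i) (@colour_adj_side i) lD _ M1 evn kn nM.
  by rewrite part_bipart; case: s; rewrite card_imset //; [apply: inr_inj | apply: inl_inj].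
by rewrite -sz; apply: mono_cycle; rewrite // sz; case: n evn kn {nM sz}.
Qed.

Variables (m t : nat) (n : 'I_t -> nat).
Hypothesis tK : t < K.
Hypothesis b_large : 81 ^ t * m <= b.
Hypothesis n_even : forall i, ~~ odd (n i).
Hypothesis n_le : forall i, n i <= m.
Hypothesis n_long : forall i, 2 * up_log 2 (81 ^ (t - 1) * m) < n i.

Lemma colour_descent j : j <= t ->
  (exists i : 'I_t, mono_copy c (widen_ord (ltnW tK) i) (cycle_graph (n i))) \/
  exists A B, [/\ 81 ^ (t - j) * m <= #|A|, 81 ^ (t - j) * m <= #|B| &
                  forall x y, x \in A -> y \in B -> j <= c x y].
Proof.
elim: j => [_|j IHj jt].
  by right; exists setT, setT; rewrite cardsT card_ord subn0.
have [|[A [B [cA cB geAB]]]] := IHj (ltnW jt); first by left.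
set M := 81 ^ (t - j.+1) * m; pose i := Ordinal jt.
have eM : 81 ^ (t - j) * m = 81 * M by rewrite /M mulnA -expnS subnSK.
have mM : m <= M by rewrite leq_pmull // expn_gt0.
have M1 : 1 < M.
  apply: leq_trans (leq_trans (n_le i) mM).
  by move: (n_even i) (n_long i); case: (n i) => [|[|]].
have kn : 2 * up_log 2 M < n i.
  apply: leq_ltn_trans (n_long i); rewrite leq_mul2l leq_up_log ?orbT //.
  by rewrite leq_mul2r leq_pexp2l ?orbT //; apply: leq_sub2l.
rewrite eM in cA cB.
have [mono|[A' [B' [cA' cB' gtAB]]]] :=
  colour_step (i := Ordinal (ltn_trans jt tK)) cA cB geAB M1 (n_even i) kn
    (leq_trans (n_le i) mM).
  by left; exists i; congr (mono_copy c _ _): mono; apply: val_inj.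
by right; exists A', B'.
Qed.

End ColourClasses.

Theorem corollary2p5 (m t : nat) (n : 'I_t -> nat) :
  0 < m -> 0 < t ->
  (forall i, 0 < n i /\ ~~ odd (n i) /\ n i <= m /\
             (2 * up_log 2 (81 ^ (t - 1) * m)).+1 <= n i) ->
  BR_le (rcons [seq cycle_graph (n i) | i <- enum 'I_t] (Kmm m)) (81 ^ t * m).
Proof.
move=> _ _ hn; set Gs := rcons _ _.
have sG : size Gs = t.+1 by rewrite size_rcons size_map size_enum_ord.
have tK : t < size Gs by rewrite sG.
have nthC (i : 'I_t) : nth (cycle_graph 0) Gs (widen_ord (ltnW tK) i) = cycle_graph (n i).
  by rewrite /= nth_rcons size_map size_enum_ord ltn_ord (nth_map i) ?size_enum_ord ?nth_ord_enum.
have nthK : nth (cycle_graph 0) Gs t = Kmm m.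
  by rewrite nth_rcons size_map size_enum_ord ltnn eqxx.
exists (81 ^ t * m) => // col.
have [|||[i mono]|[A [B [cA cB geAB]]]] := colour_descent (n := n) col tK (leqnn _) _ _ _ (leqnn t).
- by move=> i; case: (hn i) => _ [].
- by move=> i; case: (hn i) => _ [_ []].
- by move=> i; case: (hn i) => _ [_ [_]].
- by exists (widen_ord (ltnW tK) i); rewrite nthC.
exists (Ordinal tK); rewrite nthK; rewrite subnn expn0 mul1n in cA cB.
apply: Kmm_copy cA cB _ => x y xA yB; apply/val_inj/eqP.
by rewrite eqn_leq geAB // andbT -ltnS -sG ltn_ord.
Qed.
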